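(* Let $G=\mathbb F[\mathcal A]$ be the free group on a set $\mathcal A$ and let $\Phi=(\{\mathcal I_t\},\{\phi_t\})$ be a semi-saturated partial action of $G$ on a generalized Boolean algebra $\mathcal B$. Let $C\subseteq\mathcal B$ generate $\mathcal B$ as a generalized Boolean algebra, and for each $a\in\mathcal A$ let $C_a\subseteq\mathcal I_a$ and $C_{a^{-1}}\subseteq \mathcal I_{a^{-1}}$ be covers of the generalized Boolean algebras $\mathcal I_a$ and $\mathcal I_{a^{-1}}$ respectively. Then, for any commutative unital ring $R$, $\mathrm{Lc}(R,\mathcal B)\rtimes_\Phi G$ is generated as an $R$-algebra by $$\{U\delta_e\}_{U\in C}\cup\{V\delta_a\}_{a\in\mathcal A,\,V\in C_a}\cup\{V\delta_{a^{-1}}\}_{a\in\mathcal A,\,V\in C_{a^{-1}}}.$$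
   Context: A generalized Boolean algebra is a distributive lattice $\mathcal B$ with a least element $0$ that is relatively complemented; its meet, join and relative complement are written $\wedge,\vee,\setminus$, and $x\le y$ means $x\wedge y=x$. An ideal of $\mathcal B$ is a subset $\mathcal I\subseteq\mathcal B$ such that $a\vee b\in\mathcal I$ for $a,b\in\mathcal I$ and $a\wedge b\in\mathcal I$ for $a\in\mathcal I$, $b\in\mathcal B$ (an ideal is itself a generalized Boolean algebra). A subset $C$ covers $\mathcal B$ if every $x\in\mathcal B$ satisfies $x\le s_1\vee\dots\vee s_n$ for some $s_i\in C$; $C$ generates $\mathcal B$ if $C$ is contained in no proper generalized Boolean subalgebra. A partial action $\Phi=(\{\mathcal I_t\}_{t\in G},\{\phi_t\}_{t\in G})$ of a group $G$ (identity $e$) on $\mathcal B$ consists of ideals $\mathcal I_t$ and generalized Boolean algebra isomorphisms $\phi_t:\mathcal I_{t^{-1}}\to\mathcal I_t$ with (i) $\mathcal I_e=\mathcal B$, $\phi_e=\mathrm{id}$; (ii) $\phi_s(\mathcal I_{s^{-1}}\cap\mathcal I_t)=\mathcal I_s\cap\mathcal I_{st}$; (iii) $\phi_s\phi_t(x)=\phi_{st}(x)$ for $x\in\mathcal I_{t^{-1}}\cap\mathcal I_{(st)^{-1}}$. For $G=\mathbb F[\mathcal A]$ with reduced word length $|\cdot|$, $\Phi$ is semi-saturated if $\phi_s\circ\phi_t=\phi_{st}$ whenever $|st|=|s|+|t|$ (equivalently, $\mathcal I_{st}\subseteq\mathcal I_s$ whenever $|st|=|s|+|t|$). For a commutative unital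 ring $R$, $\mathrm{Lc}(R,\mathcal B)$ is the set of functions $f:R\setminus\{0\}\to\mathcal B$ with pairwise disjoint values, almost all $0$, viewed as the function $\sum_r r\,1_{f(r)}$ (equivalently the $R$-algebra of locally constant compactly supported $R$-valued functions on the Stone dual of $\mathcal B$); $1_U$ sends $1\mapsto U$, else $0$. With $D_t=\mathrm{Lc}(R,\mathcal I_t)$, $\tilde\phi_t(f)=\phi_t\circ f$, the partial skew group ring $\mathrm{Lc}(R,\mathcal B)\rtimes_\Phi G$ consists of finite sums $\sum_t f_t\delta_t$, $f_t\in D_t$, with $(a\delta_s)(b\delta_t)=\tilde\phi_s(\tilde\phi_{s^{-1}}(a)b)\delta_{st}$. For $U\in\mathcal I_g$, $U\delta_g:=1_U\delta_g$. *)

From HB Require Import structures.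
From mathcomp Require Import all_boot all_order all_algebra.
From mathcomp Require Import finmap boolp classical_sets cardinality.
Set Implicit Arguments. Unset Strict Implicit. Unset Printing Implicit Defensive.
Import Order.TTheory GRing.Theory.
Local Open Scope order_scope.

(* A letter (a, false) stands for a, (a, true) for a^-1.               *)
Definition letter (A : choiceType) := (A * bool)%type.
Definition linv (A : choiceType) (x : letter A) : letter A := (x.1, ~~ x.2).

Fixpoint reduced (A : choiceType) (w : seq (letter A)) : bool :=
  match w with
  | x :: ((y :: _) as w') => (y != linv x) && reduced w'
  | _ => true
  end.

Definition push (A : choiceType) (x : letter A) (w : seq (letter A)) :=
  match w with
  | y :: w' => if y == linv x then w' else x :: w
  | [::] => [:: x]
  end.
Definition freered (A : choiceType) (w : seq (letter A)) := foldr (@push A) [::] w.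

Lemma reduced_push (A : choiceType) (x : letter A) w :
  reduced w -> reduced (push x w).
Proof.
case: w => [|y w] //= Hw.
case: eqP => [_|/eqP Hy]; last by rewrite /= Hy.
by case: w Hw => // z w /andP[].
Qed.

Lemma reduced_freered (A : choiceType) (w : seq (letter A)) : reduced (freered w).
Proof. by elim: w => //= x w IH; apply: reduced_push. Qed.

Definition FG (A : choiceType) := {w : seq (letter A) | reduced w}.

Definition fg1 (A : choiceType) : FG A := exist _ [::] isT.
Definition fgmul (A : choiceType) (s t : FG A) : FG A :=
  exist _ (freered (sval s ++ sval t)) (reduced_freered _).
Definition fginv (A : choiceType) (s : FG A) : FG A :=
  exist _ (freered (rev (map (@linv A) (sval s)))) (reduced_freered _).
Definition fglen (A : choiceType) (s : FG A) : nat := size (sval s).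
Definition fggen (A : choiceType) (a : A) : FG A := exist _ [:: (a, false)] isT.
Definition fggeninv (A : choiceType) (a : A) : FG A := exist _ [:: (a, true)] isT.

(* Generalized Boolean algebras = cbDistrLatticeType (distributive     *)
(* lattices with bottom, relatively complemented; `\` is the relative  *)
(* complement).                                                         *)

(* ideal (nonempty, hence containing 0, so that it is itself a GBA) *)
Definition gba_ideal d (B : cbDistrLatticeType d) (I : B -> Prop) : Prop :=
  I \bot /\
  (forall a b, I a -> I b -> I (a `|` b)) /\
  (forall a b, I a -> I (a `&` b)).

Definition gba_iso d (B : cbDistrLatticeType d) (I J : B -> Prop) (f : B -> B) : Prop :=
  (forall x, I x -> J (f x)) /\
  (forall x y, I x -> I y -> f x = f y -> x = y) /\
  (forall y, J y -> exists2 x, I x & f x = y) /\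
  (forall x y, I x -> I y -> f (x `&` y) = f x `&` f y) /\
  (forall x y, I x -> I y -> f (x `|` y) = f x `|` f y) /\
  (forall x y, I x -> I y -> f (x `\` y) = f x `\` f y).

(* partial action of F[A] on B: Id t = I_t, phi t = phi_t : I_{t^-1} -> I_t *)
Definition partial_action (A : choiceType) d (B : cbDistrLatticeType d)
    (Id : FG A -> B -> Prop) (phi : FG A -> B -> B) : Prop :=
  (forall t, gba_ideal (Id t)) /\
  (forall t, gba_iso (Id (fginv t)) (Id t) (phi t)) /\
  (forall x, Id (fg1 A) x) /\ (forall x, phi (fg1 A) x = x) /\
  (* (ii) phi_s(I_{s^-1} ∩ I_t) = I_s ∩ I_{st} *)
  (forall s t y, (Id s y /\ Id (fgmul s t) y) <->
                 exists x, [/\ Id (fginv s) x, Id t x & phi s x = y]) /\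
  (forall s t x, Id (fginv t) x -> Id (fginv (fgmul s t)) x ->
                 phi s (phi t x) = phi (fgmul s t) x).

(* semi-saturated: phi_s o phi_t = phi_{st} (as partial maps, i.e. same
   domain and same values) whenever |st| = |s| + |t| *)
Definition semi_saturated (A : choiceType) d (B : cbDistrLatticeType d)
    (Id : FG A -> B -> Prop) (phi : FG A -> B -> B) : Prop :=
  partial_action Id phi /\
  forall s t, fglen (fgmul s t) = (fglen s + fglen t)%N ->
    (forall x, (Id (fginv t) x /\ Id (fginv s) (phi t x)) <-> Id (fginv (fgmul s t)) x) /\
    (forall x, Id (fginv (fgmul s t)) x -> phi s (phi t x) = phi (fgmul s t) x).

Definition gba_subalg d (B : cbDistrLatticeType d) (S : B -> Prop) : Prop :=
  S \bot /\
  (forall a b, S a -> S b -> S (a `|` b)) /\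
  (forall a b, S a -> S b -> S (a `&` b)) /\
  (forall a b, S a -> S b -> S (a `\` b)).

Definition gba_generates d (B : cbDistrLatticeType d) (C : B -> Prop) : Prop :=
  forall S, gba_subalg S -> (forall x, C x -> S x) -> forall x, S x.

Definition gba_covers d (B : cbDistrLatticeType d) (I Cs : B -> Prop) : Prop :=
  forall x, I x -> exists s : seq B,
    (forall y, y \in s -> Cs y) /\ x <= \big[Order.join / \bot]_(y <- s) y.

(* Lc(R, B): functions f : R -> B (f 0 = 0, representing a function on *)
(* R \ {0}), pairwise disjoint values, almost all 0.                    *)

(* join of the family F over the indices in S (the family is meant to
   have only finitely many nonzero members in S) *)
Definition bjoin d (B : cbDistrLatticeType d) (T : choiceType)
    (S : T -> Prop) (F : T -> B) : B :=
  \big[Order.join / \bot]_(i <- fset_set (fun i => S i /\ F i <> \bot)) F i.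

Section Lc.
Local Open Scope ring_scope.

Definition lc_fun (R : comPzRingType) d (B : cbDistrLatticeType d)
    (I : B -> Prop) (f : R -> B) : Prop :=
  (f 0 = \bot)%O /\
  (forall r s, r <> s -> (f r `&` f s = \bot)%O) /\
  (forall r, I (f r)) /\
  finite_set (fun r => f r <> \bot%O).

Definition lc0 (R : comPzRingType) d (B : cbDistrLatticeType d) : R -> B :=
  fun _ => \bot%O.

Definition lc_supp (R : comPzRingType) d (B : cbDistrLatticeType d) (f : R -> B) : B :=
  bjoin (fun _ => True) f.

Definition lc_add (R : comPzRingType) d (B : cbDistrLatticeType d)
    (f g : R -> B) : R -> B :=
  fun r => if r == 0 then \bot%O else
    (bjoin (fun p : R * R => p.1 + p.2 = r) (fun p => f p.1 `&` g p.2)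
     `|` (f r `\` lc_supp g) `|` (g r `\` lc_supp f))%O.

Definition lc_mul (R : comPzRingType) d (B : cbDistrLatticeType d)
    (f g : R -> B) : R -> B :=
  fun r => if r == 0 then \bot%O else
    bjoin (fun p : R * R => p.1 * p.2 = r) (fun p => f p.1 `&` g p.2)%O.

Definition lc_scale (R : comPzRingType) d (B : cbDistrLatticeType d)
    (c : R) (f : R -> B) : R -> B :=
  fun r => if r == 0 then \bot%O else bjoin (fun s : R => c * s = r) f.

Definition lc_ind (R : comPzRingType) d (B : cbDistrLatticeType d) (U : B) : R -> B :=
  fun r => if (r == 1) && (r != 0) then U else \bot%O.

Definition lc_act (A : choiceType) (R : comPzRingType) d (B : cbDistrLatticeType d)
    (phi : FG A -> B -> B) (t : FG A) (f : R -> B) : R -> B :=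
  fun r => phi t (f r).

(* Partial skew group ring Lc(R,B) x|_Phi F[A]: an element sum_t f_t d_t *)
(* is the finitely supported family t |-> f_t with f_t in D_t.          *)
Definition skew_elem (A : choiceType) (R : comPzRingType) d (B : cbDistrLatticeType d)
    (Id : FG A -> B -> Prop) (X : FG A -> R -> B) : Prop :=
  (forall t, lc_fun (Id t) (X t)) /\ finite_set (fun t => X t <> @lc0 R d B).

Definition skew0 (A : choiceType) (R : comPzRingType) d (B : cbDistrLatticeType d)
  : FG A -> R -> B := fun _ => @lc0 R d B.

Definition skew_add (A : choiceType) (R : comPzRingType) d (B : cbDistrLatticeType d)
    (X Y : FG A -> R -> B) : FG A -> R -> B :=
  fun g => lc_add (X g) (Y g).

Definition skew_scale (A : choiceType) (R : comPzRingType) d (B : cbDistrLatticeType d)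
    (c : R) (X : FG A -> R -> B) : FG A -> R -> B :=
  fun g => lc_scale c (X g).

(* (a d_s)(b d_t) = phi~_s(phi~_{s^-1}(a) b) d_{st}, extended bilinearly *)
Definition skew_mul (A : choiceType) (R : comPzRingType) d (B : cbDistrLatticeType d)
    (phi : FG A -> B -> B) (X Y : FG A -> R -> B) : FG A -> R -> B :=
  fun g => \big[@lc_add R d B/@lc0 R d B]_(p <- fset_set
                 (fun p : FG A * FG A => [/\ fgmul p.1 p.2 = g,
                                           X p.1 <> @lc0 R d B & Y p.2 <> @lc0 R d B]))
             lc_act phi p.1 (lc_mul (lc_act phi (fginv p.1) (X p.1)) (Y p.2)).

(* U d_g := 1_U d_g *)
Definition skew_delta (A : choiceType) (R : comPzRingType) d (B : cbDistrLatticeType d)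
    (g : FG A) (U : B) : FG A -> R -> B :=
  fun h => if h == g then @lc_ind R d B U else @lc0 R d B.

Inductive gen_alg (A : choiceType) (R : comPzRingType) d (B : cbDistrLatticeType d)
    (phi : FG A -> B -> B) (S : (FG A -> R -> B) -> Prop) : (FG A -> R -> B) -> Prop :=
| gen_base X : S X -> gen_alg phi S X
| gen_zero : gen_alg phi S (@skew0 A R d B)
| gen_add X Y : gen_alg phi S X -> gen_alg phi S Y -> gen_alg phi S (skew_add X Y)
| gen_scale (c : R) X : gen_alg phi S X -> gen_alg phi S (skew_scale c X)
| gen_mul X Y : gen_alg phi S X -> gen_alg phi S Y -> gen_alg phi S (skew_mul phi X Y).

End Lc.

From HB Require Import structures.
From mathcomp Require Import all_boot all_order all_algebra.
From mathcomp Require Import finmap boolp classical_sets cardinality.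
Set Implicit Arguments. Unset Strict Implicit. Unset Printing Implicit Defensive.
Import Order.Theory GRing.Theory.

(* The generated subalgebra contains every [U d_e]: those U form a generalized
   Boolean subalgebra containing C, because [U d_e * W d_g = (U `&` W) d_g],
   disjoint joins become sums and [(U `\` W) d_e = U d_e - (U `&` W) d_e].
   Splitting V in I_a along a finite cover [V <= y_1 `|` ... `|` y_n] then
   writes [V d_a] as a sum of products [V' d_e * y_i d_a].  For a reduced word
   [x t'], semi-saturation gives I_(x t') <= I_x, and for V in I_x and I_(x t')
   the element [V d_(x t')] factors as [V d_x * phi_(x^-1)(V) d_t'], so
   induction on the length of t yields every [V d_t].  Finally an arbitrary
   element [sum_t f_t d_t] is an R-linear combination of such elements, as
   every [f_t] in Lc(R, I_t) is [sum_r r 1_(f_t r)]. *)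

Section FreeGroup.
Variable A : choiceType.
Implicit Types (x y : letter A) (w : seq (letter A)) (s t : FG A).

Definition fgletter x : FG A := exist _ [:: x] isT.

Lemma linvK x : linv (linv x) = x.
Proof. by case: x => a b; rewrite /linv /= negbK. Qed.

Lemma reduced_tail x w : reduced (x :: w) -> reduced w.
Proof. by case: w => //= y w /andP[]. Qed.

Lemma freered_id w : reduced w -> freered w = w.
Proof.
elim: w => // x w IH Hw /=; rewrite IH; last exact: reduced_tail Hw.
by case: w Hw {IH} => //= y w /andP[Hy _]; rewrite (negbTE Hy).
Qed.

Lemma reduced_rcons w y z :
  reduced (rcons w y) -> z != linv y -> reduced (rcons (rcons w y) z).
Proof.
elim: w => [|a [|b w] IH] /=; first by move=> _ ->.
  by move=> /andP[-> _] Hz; rewrite /= Hz.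
by move=> /andP[-> Hw] Hz; exact: IH.
Qed.

Lemma reduced_rev w : reduced w -> reduced (rev (map (@linv A) w)).
Proof.
elim: w => // x [|y w] IH Hw //.
have Hyx : linv x != linv (linv y).
  by move: Hw => /= /andP[Hy _]; rewrite linvK; apply: contra Hy => /eqP <-.
have := IH (reduced_tail Hw); rewrite map_cons rev_cons => Hrec.
by rewrite map_cons rev_cons map_cons rev_cons; apply: reduced_rcons.
Qed.

Lemma fg_val_inj s t : sval s = sval t -> s = t.
Proof. by case: s t => s Hs [t Ht] /= E; subst t; congr exist; exact: eq_irrelevance. Qed.

Lemma fginvE t : sval (fginv t) = rev (map (@linv A) (sval t)).
Proof. by rewrite /= freered_id //; apply: reduced_rev; case: t. Qed.

Lemma fginvK t : fginv (fginv t) = t.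
Proof.
by apply: fg_val_inj; rewrite !fginvE map_rev revK -map_comp (eq_map linvK) map_id.
Qed.

Lemma fginv1 : fginv (fg1 A) = fg1 A.
Proof. exact: fg_val_inj. Qed.

Lemma fgmul1g t : fgmul (fg1 A) t = t.
Proof. by apply: fg_val_inj => /=; rewrite freered_id //; case: t. Qed.

Lemma fgmulVg t : fgmul (fginv t) t = fg1 A.
Proof.
apply: fg_val_inj; case: t => w Hw /=.
rewrite [freered (rev _)]freered_id ?reduced_rev //.
rewrite /freered foldr_cat -/(freered w) freered_id //.
elim: w Hw => // x w IH Hw.
by rewrite map_cons rev_cons foldr_rcons /= linvK eqxx; exact/IH/reduced_tail/Hw.
Qed.

Lemma fgletterE x : fgletter x = if x.2 then fggeninv x.1 else fggen x.1.
Proof. by case: x => a []; apply: fg_val_inj. Qed.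

Lemma fgmul_letter_cons x w (Hw : reduced (x :: w)) :
  fgmul (fgletter x) (exist _ w (reduced_tail Hw)) = exist _ (x :: w) Hw.
Proof.
by apply: fg_val_inj; have := freered_id Hw; rewrite /= (freered_id (reduced_tail Hw)).
Qed.

Lemma fginv_cons x w (Hw : reduced (x :: w)) :
  fgmul (fginv (exist _ w (reduced_tail Hw))) (fginv (fgletter x)) =
  fginv (exist _ (x :: w) Hw).
Proof.
apply: fg_val_inj.
change (freered (sval (fginv (exist _ w (reduced_tail Hw))) ++ sval (fginv (fgletter x)))
  = sval (fginv (exist _ (x :: w) Hw))).
by rewrite !fginvE /= cats1 -rev_cons -map_cons freered_id //; apply: reduced_rev.
Qed.

Lemma fglen_fginv t : fglen (fginv t) = fglen t.
Proof. by rewrite /fglen fginvE size_rev size_map. Qed.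

End FreeGroup.

Local Open Scope order_scope.

Lemma meet_big_join_eq0 d (B : cbDistrLatticeType d) (I : Type) (s : seq I)
    (F : I -> B) (x : B) :
  (forall i, x `&` F i = \bot) -> x `&` \big[Order.join / \bot]_(i <- s) F i = \bot.
Proof.
move=> H; elim: s => [|i s IH]; first by rewrite big_nil meetx0.
by rewrite big_cons meetUr H IH joinx0.
Qed.

Section BooleanJoins.
Variables (d : Order.disp_t) (B : cbDistrLatticeType d) (T : choiceType).
Implicit Types (S : T -> Prop) (F : T -> B).

Lemma bjoin_eq0 S F : (forall i, S i -> F i = \bot) -> bjoin S F = \bot.
Proof.
move=> H; rewrite /bjoin (_ : (fun i => _) = set0) ?fset_set0 ?big_seq_fset0 //.
by apply: funext => i; apply: propext; split => // -[/H].
Qed.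

Lemma bjoin_eq1 S F i0 :
  S i0 -> (forall i, i <> i0 -> F i = \bot) -> bjoin S F = F i0.
Proof.
move=> Si0 H; have [F0|F0] := EM (F i0 = \bot).
  by rewrite F0; apply: bjoin_eq0 => i _; have [->|/H] := EM (i = i0).
rewrite /bjoin (_ : (fun i => _) = [set i0]%classic) ?fset_set1 ?big_seq_fset1 //.
apply: funext => i; apply: propext; split; last by move=> ->.
by have [->|/H ->] := EM (i = i0); case.
Qed.

End BooleanJoins.

Section LocallyConstant.
Variables (d : Order.disp_t) (B : cbDistrLatticeType d) (R : comPzRingType).
Implicit Types (f g : R -> B) (U V W : B) (c r : R).

Definition lc_pt c V : R -> B := fun r => if (r == c) && (r != 0%R) then V else \bot.

Lemma lc_indE V : lc_ind V = lc_pt 1%R V.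
Proof. by []. Qed.

Lemma lc_pt0 c V : lc_pt c V 0%R = \bot.
Proof. by rewrite /lc_pt eqxx andbF. Qed.

Lemma lc_pt_bot c : lc_pt c \bot = @lc0 R d B.
Proof. by apply: funext => r; rewrite /lc_pt; case: ifP. Qed.

Lemma oner_neq0_of_neq0 r : r != 0%R -> (1%R : R) != 0%R.
Proof. by apply: contra => /eqP H; rewrite -[r]mulr1 H mulr0. Qed.

Lemma lc_add_disj f g : (forall r s, f r `&` g s = \bot) ->
  lc_add f g = fun r => if r == 0%R then \bot else f r `|` g r.
Proof.
move=> H; apply: funext => r; rewrite /lc_add; case: ifP => // _.
rewrite bjoin_eq0 // join0x /lc_supp.
by rewrite !disj_diffl //; apply/eqP; apply: meet_big_join_eq0 => i //; rewrite meetC.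
Qed.

Lemma lc_add0r f : f 0%R = \bot -> lc_add f (@lc0 R d B) = f.
Proof.
move=> H; rewrite lc_add_disj => [|r s]; last by rewrite /lc0 meetx0.
by apply: funext => r; case: eqP => [->|]; rewrite ?H // /lc0 joinx0.
Qed.

Lemma lc_add0l f : f 0%R = \bot -> lc_add (@lc0 R d B) f = f.
Proof.
move=> H; rewrite lc_add_disj => [|r s]; last by rewrite /lc0 meet0x.
by apply: funext => r; case: eqP => [->|]; rewrite ?H // /lc0 join0x.
Qed.

Lemma lc_add_pt1 U W :
  U `&` W = \bot -> lc_add (lc_pt 1%R U) (lc_pt 1%R W) = lc_pt 1%R (U `|` W).
Proof.
move=> H; rewrite lc_add_disj => [|r s]; last first.
  by rewrite /lc_pt; do 2 case: ifP => _; rewrite ?meet0x ?meetx0.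
apply: funext => r; rewrite /lc_pt; case: eqP => [->|_]; first by rewrite andbF.
by case: ifP; rewrite ?joinx0.
Qed.

Lemma lc_supp_pt c V : c != 0%R -> lc_supp (lc_pt c V) = V.
Proof.
move=> Hc; rewrite /lc_supp (@bjoin_eq1 _ _ _ _ _ c) //; first by rewrite /lc_pt eqxx Hc.
by move=> i /eqP Hi; rewrite /lc_pt (negbTE Hi).
Qed.

Lemma lc_add_pt_diff U V :
  V <= U -> lc_add (lc_pt 1%R U) (lc_pt (-1)%R V) = lc_pt 1%R (U `\` V).
Proof.
move=> HVU; apply: funext => r; rewrite /lc_add.
case: eqP => [->|/eqP Hr]; first by rewrite lc_pt0.
have H1 := oner_neq0_of_neq0 Hr.
rewrite bjoin_eq0 => [|[p1 p2] /= Hp]; last first.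
  rewrite /lc_pt; case: (p1 =P 1%R) => [E1|] /=; last by rewrite meet0x.
  case: (p2 =P (-1)%R) => [E2|] /=; last by rewrite meetx0.
  by move: Hr; rewrite -Hp E1 E2 subrr eqxx.
rewrite join0x !lc_supp_pt ?oppr_eq0 // /lc_pt Hr !andbT.
have E : V `\` U = \bot by apply/eqP; rewrite diff_eq0.
by case: (r =P 1%R) => _; case: (r =P (-1)%R) => _; rewrite ?diff0x ?joinx0 ?join0x ?E ?joinx0.
Qed.

Lemma lc_scale_pt1 c V : lc_scale c (lc_pt 1%R V) = lc_pt c V.
Proof.
apply: funext => r; rewrite /lc_scale /lc_pt; case: eqP => [->|/eqP Hr].
  by rewrite andbF.
have [Hc|Hc] := EM (c * 1 = r)%R.
  rewrite (@bjoin_eq1 _ _ _ _ _ 1%R) // => [|i /eqP Hi]; last by rewrite (negbTE Hi).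
  by rewrite eqxx (oner_neq0_of_neq0 Hr) -Hc mulr1 eqxx.
rewrite bjoin_eq0 => [|s Hs]; last by case: eqP => //= Es; subst s.
by rewrite andbT; case: eqP => // E; subst r; rewrite mulr1 in Hc.
Qed.

Lemma lc_scale0 c : lc_scale c (@lc0 R d B) = @lc0 R d B.
Proof. by apply: funext => r; rewrite /lc_scale; case: ifP => //; rewrite bjoin_eq0. Qed.

Lemma lc_mul_pt1 U W : lc_mul (lc_pt 1%R U) (lc_pt 1%R W) = lc_pt 1%R (U `&` W).
Proof.
apply: funext => r; rewrite /lc_mul; case: eqP => [->|/eqP Hr]; first by rewrite lc_pt0.
have Hpt : forall p : R * R, p <> (1%R, 1%R) -> lc_pt 1%R U p.1 `&` lc_pt 1%R W p.2 = \bot.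
  move=> [p1 p2] Hp; rewrite /lc_pt /=.
  case: (p1 =P 1%R) => [E1|] /=; last by rewrite meet0x.
  by case: (p2 =P 1%R) => [E2|] /=; [subst | rewrite meetx0].
have H1 := oner_neq0_of_neq0 Hr.
have [Hc|Hc] := EM ((1 * 1)%R = r).
  by rewrite (@bjoin_eq1 _ _ _ _ _ (1%R, 1%R)) // /lc_pt /= eqxx H1 -Hc mulr1 eqxx H1.
rewrite bjoin_eq0 => [|p Hp]; last by apply: Hpt => Ep; apply: Hc; rewrite -Hp Ep.
by rewrite /lc_pt Hr andbT; case: eqP => // E; subst r; rewrite mulr1 in Hc.
Qed.

(* Over the zero ring every [lc_pt 1%R V] vanishes. *)
Lemma lc_pt1_eq0 U : lc_pt 1%R U = @lc0 R d B ->
  forall V, lc_pt 1%R V = @lc0 R d B \/ U = \bot.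
Proof.
move=> H V; have [/eqP H1|H1] := boolP ((1%R : R) == 0%R).
  left; apply: funext => r; rewrite /lc_pt /lc0.
  by rewrite -[r]mulr1 H1 mulr0 eqxx andbF.
by right; have := congr1 (fun f => f 1%R) H; rewrite /lc_pt eqxx H1.
Qed.

Definition lc_restrict (s : seq R) f : R -> B := fun r => if r \in s then f r else \bot.

Lemma lc_restrict_cons r0 (s : seq R) f : f 0%R = \bot ->
  (forall r r', r <> r' -> f r `&` f r' = \bot) -> r0 \notin s ->
  lc_restrict (r0 :: s) f = lc_add (lc_pt r0 (f r0)) (lc_restrict s f).
Proof.
move=> Hf0 Hdisj Hr0; rewrite lc_add_disj => [|r r']; last first.
  rewrite /lc_pt /lc_restrict; case: ifP => [/andP[/eqP -> _]|_]; last by rewrite meet0x.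
  case: ifP => Hr'; last by rewrite meetx0.
  by apply: Hdisj => E; subst r'; rewrite Hr' in Hr0.
apply: funext => r; rewrite /lc_restrict in_cons /lc_pt.
case: (r =P 0%R) => [->|/eqP Hr]; first by rewrite Hf0; case: ifP.
by rewrite andbT; case: (r =P r0) => [->|_] /=; rewrite ?(negbTE Hr0) ?joinx0 ?join0x.
Qed.

Lemma lc_restrict_supp f : finite_set (fun r => f r <> \bot) ->
  lc_restrict (fset_set (fun r => f r <> \bot)) f = f.
Proof.
move=> Hfin; apply: funext => r; rewrite /lc_restrict.
have [H|H] := EM (f r = \bot); first by rewrite H; case: ifP.
by rewrite in_fset_set // mem_set.
Qed.

End LocallyConstant.

Section SkewGroupRing.
Variables (A : choiceType) (d : Order.disp_t) (B : cbDistrLatticeType d).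
Variables (R : comPzRingType) (phi : FG A -> B -> B).
Implicit Types (g h s u : FG A) (f : R -> B) (U V W : B).

Local Notation lc0 := (@lc0 R d B).
Local Notation skew0 := (@skew0 A R d B).
Local Notation delta := (@skew_delta A R d B).

Definition skew_single g f : FG A -> R -> B := fun h => if h == g then f else lc0.

Lemma skew_single0 g : skew_single g lc0 = skew0.
Proof. by apply: funext => h; rewrite /skew_single; case: ifP. Qed.

Lemma skew_add_single g f1 f2 :
  skew_add (skew_single g f1) (skew_single g f2) = skew_single g (lc_add f1 f2).
Proof.
apply: funext => h; rewrite /skew_add /skew_single; case: ifP => // _.
by rewrite lc_add0r.
Qed.

Lemma skew_scale_delta c g V : skew_scale c (delta g V) = skew_single g (lc_pt c V).
Proof.
apply: funext => h; rewrite /skew_scale /skew_delta /skew_single; case: ifP => _.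
  exact: lc_scale_pt1.
exact: lc_scale0.
Qed.

Lemma skew_deltaE g U : delta g U = skew_single g (lc_pt 1%R U).
Proof. by []. Qed.

Lemma skew_delta_bot g : delta g \bot = skew0.
Proof. by rewrite skew_deltaE lc_pt_bot skew_single0. Qed.

Lemma skew_add_delta_disj g U W :
  U `&` W = \bot -> skew_add (delta g U) (delta g W) = delta g (U `|` W).
Proof. by move=> H; rewrite !skew_deltaE skew_add_single lc_add_pt1. Qed.

Lemma skew_delta_diff g U W : W <= U ->
  delta g (U `\` W) = skew_add (delta g U) (skew_scale (-1)%R (delta g W)).
Proof.
by move=> HWU; rewrite skew_scale_delta !skew_deltaE skew_add_single lc_add_pt_diff.
Qed.

Definition skew_restrict (ts : seq (FG A)) (X : FG A -> R -> B) : FG A -> R -> B :=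
  fun h => if h \in ts then X h else lc0.

Lemma skew_restrict_cons g ts (X : FG A -> R -> B) : (forall h, X h 0%R = \bot) ->
  g \notin ts ->
  skew_restrict (g :: ts) X = skew_add (skew_single g (X g)) (skew_restrict ts X).
Proof.
move=> HX0 Hg; apply: funext => h; rewrite /skew_add /skew_single /skew_restrict in_cons.
case: (h =P g) => [->|_] /=; first by rewrite (negbTE Hg) lc_add0r.
by rewrite lc_add0l //; case: ifP.
Qed.

Lemma skew_restrict_supp (X : FG A -> R -> B) : finite_set (fun h => X h <> lc0) ->
  skew_restrict (fset_set (fun h => X h <> lc0)) X = X.
Proof.
move=> Hfin; apply: funext => h; rewrite /skew_restrict.
have [H|H] := EM (X h = lc0); first by rewrite H; case: ifP.
by rewrite in_fset_set // mem_set.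
Qed.

Hypothesis phi_bot : forall s, phi s \bot = \bot.

Lemma lc_act_pt1 s V : lc_act phi s (lc_pt 1%R V : R -> B) = lc_pt 1%R (phi s V).
Proof. by apply: funext => r; rewrite /lc_act /lc_pt; case: ifP. Qed.

Lemma skew_mul_delta s u U W :
  skew_mul phi (delta s U) (delta u W) =
  delta (fgmul s u) (phi s (phi (fginv s) U `&` W)).
Proof.
apply: funext => g; rewrite /skew_mul.
have [[Hg [HU HW]]|Hn] := EM (g = fgmul s u /\ lc_pt 1%R U <> lc0 /\ lc_pt 1%R W <> lc0).
  rewrite (_ : (fun p => _) = [set (s, u)]%classic); last first.
    apply: funext => -[p1 p2]; apply: propext; split => /=; last first.
      by case=> -> ->; rewrite /skew_delta !eqxx.
    rewrite /skew_delta; case: (p1 =P s) => [->|_]; last by case=> _ [].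
    by case: (p2 =P u) => [->|_] // [] _ _ [].
  rewrite fset_set1 -fset_seq1 big_cons big_nil /skew_delta !eqxx.
  by rewrite lc_act_pt1 lc_mul_pt1 lc_act_pt1 Hg eqxx lc_add0r ?lc_pt0.
rewrite (_ : (fun p => _) = set0); last first.
  apply: funext => -[p1 p2]; apply: propext; split => //= -[E1].
  rewrite /skew_delta; case: (p1 =P s) => // E2; case: (p2 =P u) => // E3.
  by move=> H1 H2; apply: Hn; subst.
rewrite fset_set0 big_nil /skew_delta; case: (g =P fgmul s u) => // Eg.
rewrite lc_indE.
have [HU|HW] : lc_pt 1%R U = lc0 \/ lc_pt 1%R W = lc0.
  have [|HU] := EM (lc_pt 1%R U = lc0); first by left.
  have [|HW] := EM (lc_pt 1%R W = lc0); first by right.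
  by case: Hn.
- by have [->|->] := lc_pt1_eq0 HU (phi s (phi (fginv s) U `&` W));
    rewrite ?phi_bot ?meet0x ?phi_bot ?lc_pt_bot.
- by have [->|->] := lc_pt1_eq0 HW (phi s (phi (fginv s) U `&` W));
    rewrite ?meetx0 ?phi_bot ?lc_pt_bot.
Qed.

End SkewGroupRing.

Section Generation.
Variables (A : choiceType) (d : Order.disp_t) (B : cbDistrLatticeType d).
Variables (R : comPzRingType) (Id : FG A -> B -> Prop) (phi : FG A -> B -> B).
Hypothesis Hpa : partial_action Id phi.
Variable S : (FG A -> R -> B) -> Prop.
Implicit Types (g h s t : FG A) (U V W x : B).

Local Notation delta := (@skew_delta A R d B).
Local Notation gen := (gen_alg phi S).

Lemma partial_action_bot s : phi s \bot = \bot.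
Proof.
have [Hideal [Hiso _]] := Hpa; have [_ [_ [_ [_ [_ Hdiff]]]]] := Hiso s.
have H0 := (Hideal (fginv s)).1.
by have := Hdiff _ _ H0 H0; rewrite !diffxx.
Qed.

Lemma partial_action1 x : phi (fg1 A) x = x.
Proof. by have [_ [_ [_ [H _]]]] := Hpa. Qed.

Lemma partial_actionVK g x : Id (fginv g) x -> phi (fginv g) (phi g x) = x.
Proof.
have [_ [_ [He [_ [_ Hiii]]]]] := Hpa => Hx.
by rewrite Hiii ?fgmulVg ?fginv1 ?partial_action1.
Qed.

Lemma semi_saturated_dom s t x : semi_saturated Id phi ->
  fglen (fgmul s t) = (fglen s + fglen t)%N -> Id (fginv (fgmul s t)) x -> Id (fginv t) x.
Proof. by move=> [_ Hsat] /Hsat [/(_ x) Hdom _] /Hdom []. Qed.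

Lemma skew_mul_delta1 U g W :
  skew_mul phi (delta (fg1 A) U) (delta g W) = delta g (U `&` W).
Proof.
by rewrite (@skew_mul_delta _ _ _ R _ partial_action_bot) fgmul1g fginv1 !partial_action1.
Qed.

Lemma skew_delta_factor g h V : Id g V -> Id (fgmul g h) V ->
  Id h (phi (fginv g) V) /\
  delta (fgmul g h) V = skew_mul phi (delta g V) (delta h (phi (fginv g) V)).
Proof.
have [_ [_ [_ [_ [Hii _]]]]] := Hpa => Hg Hgh.
have [x [Hx Hhx <-]] := (Hii g h V).1 (conj Hg Hgh).
by rewrite (@skew_mul_delta _ _ _ R _ partial_action_bot) partial_actionVK // meetxx.
Qed.

Lemma gen_delta1_subalg : gba_subalg (fun U => gen (delta (fg1 A) U)).
Proof.
have gen_diff U W :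
    gen (delta (fg1 A) U) -> gen (delta (fg1 A) W) -> gen (delta (fg1 A) (U `\` W)).
  move=> HU HW; have -> : U `\` W = U `\` (U `&` W) by rewrite diffxI diffxx join0x.
  rewrite skew_delta_diff ?leIl //.
  by apply: gen_add => //; apply: gen_scale; rewrite -skew_mul_delta1; apply: gen_mul.
split; first by rewrite skew_delta_bot; exact: gen_zero.
split; last split.
- move=> U W HU HW; rewrite -diffKU -skew_add_delta_disj ?diffKI //.
  by apply: gen_add => //; apply: gen_diff.
- by move=> U W HU HW; rewrite -skew_mul_delta1; apply: gen_mul.
- exact: gen_diff.
Qed.

Lemma gen_delta_covered g (I Cg : B -> Prop) :
  (forall U, gen (delta (fg1 A) U)) -> (forall y, Cg y -> gen (delta g y)) ->
  gba_covers I Cg -> forall V, I V -> gen (delta g V).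
Proof.
move=> gen1 genC Hcov V /Hcov [s [Hs Hle]].
elim: s V Hs Hle => [|y s IH] V Hs.
  by rewrite big_nil lex0 => /eqP ->; rewrite skew_delta_bot; exact: gen_zero.
rewrite big_cons -leBLR => Hle.
rewrite -(joinIB y V) -skew_add_delta_disj; last by rewrite -meetA diffKI meetx0.
apply: gen_add; last by apply: IH => // z Hz; apply: Hs; rewrite inE Hz orbT.
rewrite -skew_mul_delta1; apply: gen_mul; first exact: gen1.
by apply/genC/Hs; rewrite inE eqxx.
Qed.

Lemma gen_delta_word : semi_saturated Id phi ->
  (forall U, gen (delta (fg1 A) U)) ->
  (forall l V, Id (fgletter l) V -> gen (delta (fgletter l) V)) ->
  forall t V, Id t V -> gen (delta t V).
Proof.
move=> Hss gen1 genL [w Hw]; elim: w Hw => [|l w IH] Hw V HV.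
  by have -> : exist _ [::] Hw = fg1 A by exact: fg_val_inj.
have HlV : Id (fgletter l) V.
  rewrite -[fgletter l]fginvK.
  apply: (@semi_saturated_dom (fginv (exist _ w (reduced_tail Hw))));
    rewrite ?fginv_cons ?fginvK //.
  by rewrite !fglen_fginv /fglen /= addn1.
rewrite -fgmul_letter_cons in HV *.
have [Hw' ->] := skew_delta_factor HlV HV.
by apply: gen_mul; [exact: genL | exact: IH _ _ Hw'].
Qed.

Lemma gen_skew_elem X :
  (forall t V, Id t V -> gen (delta t V)) -> skew_elem Id X -> gen X.
Proof.
move=> genD [HX HXfin].
have HX0 h : X h 0%R = \bot by have [] := HX h.
have gen_single t : gen (skew_single t (X t)).
  have [Hf0 [Hdisj [HI Hfin]]] := HX t.
  suff gen_restrict rs : uniq rs -> gen (skew_single t (lc_restrict rs (X t))).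
    by rewrite -(lc_restrict_supp Hfin); apply/gen_restrict/fset_uniq.
  elim: rs => [_|r rs IH /andP[Hr Hu]].
    rewrite (_ : lc_restrict _ _ = @lc0 R d B) ?skew_single0; last exact: funext.
    exact: gen_zero.
  rewrite lc_restrict_cons // -skew_add_single.
  by apply: gen_add (IH Hu); rewrite -skew_scale_delta; apply/gen_scale/genD.
suff gen_restrict ts : uniq ts -> gen (skew_restrict ts X).
  by rewrite -(skew_restrict_supp HXfin); apply/gen_restrict/fset_uniq.
elim: ts => [_|t ts IH /andP[Ht Hu]].
  by rewrite (_ : skew_restrict _ _ = @skew0 A R d B); [exact: gen_zero | exact: funext].
by rewrite skew_restrict_cons //; apply: gen_add (IH Hu).
Qed.

End Generation.

Theorem mainTheorem3 (A : choiceType) (d : Order.disp_t) (B : cbDistrLatticeType d)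
    (Id : FG A -> B -> Prop) (phi : FG A -> B -> B)
    (C : B -> Prop) (Cp Cm : A -> B -> Prop) (R : comPzRingType) :
  semi_saturated Id phi ->
  gba_generates C ->
  (forall a V, Cp a V -> Id (fggen a) V) ->
  (forall a V, Cm a V -> Id (fggeninv a) V) ->
  (forall a, gba_covers (Id (fggen a)) (Cp a)) ->
  (forall a, gba_covers (Id (fggeninv a)) (Cm a)) ->
  forall X : FG A -> R -> B, skew_elem Id X ->
  gen_alg phi
    (fun Y => (exists2 U, C U & Y = @skew_delta A R d B (fg1 A) U) \/
              (exists a V, Cp a V /\ Y = @skew_delta A R d B (fggen a) V) \/
              (exists a V, Cm a V /\ Y = @skew_delta A R d B (fggeninv a) V))
    X.
Proof.
move=> Hss Hgen _ _ Hcovp Hcovm X HX.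
have Hpa := Hss.1.
set Sg := (fun Y => _ \/ _).
have gen1 U : gen_alg phi Sg (skew_delta (fg1 A) U).
  by apply: (Hgen _ (gen_delta1_subalg Hpa Sg)) => {}U HU; apply: gen_base; left; exists U.
have genL l V : Id (fgletter l) V -> gen_alg phi Sg (skew_delta (fgletter l) V).
  case: l => a []; rewrite fgletterE /=.
  - apply: (gen_delta_covered Hpa gen1 _ (Hcovm a)) => y Hy.
    by apply: gen_base; right; right; exists a, y.
  - apply: (gen_delta_covered Hpa gen1 _ (Hcovp a)) => y Hy.
    by apply: gen_base; right; left; exists a, y.
exact: gen_skew_elem (gen_delta_word Hpa Hss gen1 genL) HX.
Qed.
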